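(* Let $(a_i,b_i)\subseteq[0,1]$ be a countable family of pairwise disjoint, non-empty open intervals and let $f_i$ be $T$-norms. Let $g$ be their ordinal sum. If every $f_i$ satisfies property $A$, then $g$ satisfies property $A$. If every $f_i$ satisfies property $B$, then $g$ satisfies property $B$.
   Context: A $T$-norm is a function $\otimes:[0,1]^2\to[0,1]$ that is commutative, associative, monotonic (i.e. $x\le y$ implies $x\otimes z\le y\otimes z$) and has $1$ as neutral element ($x\otimes 1=x$). The ordinal sum $g$ of the family $(f_i,a_i,b_i)$ is defined by $$g(x,y)=\begin{cases} a_i+(b_i-a_i)\,f_i\!\left(\frac{x-a_i}{b_i-a_i},\frac{y-a_i}{b_i-a_i}\right) & \text{if } (x,y)\in[a_i,b_i]^2,\\ \min(x,y) & \text{otherwise,}\end{cases}$$ and is itself a $T$-norm. A function $f:[0,1]^2\to[0,1]$ satisfies property $A$ if for all $0\le x\le y\le z\le w\le 1$, $w+x\le y+z$ implies $f(x,w)\le f(y,z)$. It satisfies property $B$ (is $2$-increasing) if for all $0\le x\le y\le 1$ and $0\le z\le w\le 1$, $f(x,w)-f(x,z)\le f(y,w)-f(y,z)$. *)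

(* concrete reals R. Functions [0,1]^2 -> [0,1] are modelled as
   R -> R -> R, with all properties quantified over [0,1] only. *)
From Stdlib Require Import Reals.
Open Scope R_scope.

Definition in01 (x : R) : Prop := 0 <= x <= 1.

Definition is_tnorm (f : R -> R -> R) : Prop :=
  (forall x y, in01 x -> in01 y -> in01 (f x y)) /\
  (forall x y, in01 x -> in01 y -> f x y = f y x) /\
  (forall x y z, in01 x -> in01 y -> in01 z -> f x (f y z) = f (f x y) z) /\
  (forall x y z, in01 x -> in01 y -> in01 z -> x <= y -> f x z <= f y z) /\
  (forall x, in01 x -> f x 1 = x).

Definition propA (f : R -> R -> R) : Prop :=
  forall x y z w, 0 <= x -> x <= y -> y <= z -> z <= w -> w <= 1 ->
    w + x <= y + z -> f x w <= f y z.

Definition propB (f : R -> R -> R) : Prop :=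
  forall x y z w, 0 <= x -> x <= y -> y <= 1 -> 0 <= z -> z <= w -> w <= 1 ->
    f x w - f x z <= f y w - f y z.

Definition interval_family (I : Type) (a b : I -> R) : Prop :=
  (exists enc : I -> nat, forall i j, enc i = enc j -> i = j) /\
  (forall i, 0 <= a i /\ a i < b i /\ b i <= 1) /\
  (forall i j, i <> j -> forall t, ~ (a i < t < b i /\ a j < t < b j)).

Definition is_ordinal_sum (I : Type) (f : I -> R -> R -> R) (a b : I -> R)
  (g : R -> R -> R) : Prop :=
  forall x y,
    (forall i, a i <= x <= b i -> a i <= y <= b i ->
        g x y = a i + (b i - a i) *
          f i ((x - a i) / (b i - a i)) ((y - a i) / (b i - a i))) /\
    ((forall i, ~ (a i <= x <= b i /\ a i <= y <= b i)) -> g x y = Rmin x y).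

(* Off the open blocks (a_i, b_i)^2 the ordinal sum g is min: on the boundary of a block
   a T-norm is min, since 0 is absorbing and 1 neutral.  Hence, for t in [a_i, b_i],
   g s t = s when s <= a_i and g s t = t when s >= b_i.

   Property A: when x, y, z, w all lie in one block it is property A of f_i after
   rescaling.  When only y, z share a block, property A of f_i gives the Lukasiewicz
   bound f_i u v >= u + v - 1, i.e. g y z >= max (a_i, y + z - b_i), while g x w <= x.
   When y, z share no block, g y z = y >= x >= g x w.

   Property B says that s |-> g s w - g s z is nondecreasing, which is checked piecewise
   on intervals glued at common endpoints.  If z, w share a block this is done on
   [0, a_i], [a_i, b_i], [b_i, 1].  Otherwise there is a point m with g s w = s below m
   and g s z = z above m, and it remains to see that g is nondecreasing and 1-Lipschitz
   in its first argument; on a block the latter is property B of f_i against the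
   column t = 1. *)
From Stdlib Require Import Reals Lra Classical.
Open Scope R_scope.

Definition nondecr_on (lo hi : R) (h : R -> R) : Prop :=
  forall s1 s2, lo <= s1 -> s1 <= s2 -> s2 <= hi -> h s1 <= h s2.

Lemma nondecr_on_glue lo m hi h :
  nondecr_on lo m h -> nondecr_on m hi h -> nondecr_on lo hi h.
Proof.
  intros Hl Hr s1 s2 h1 h12 h2.
  destruct (Rle_dec s2 m); [apply Hl; lra|].
  destruct (Rle_dec m s1); [apply Hr; lra|].
  apply Rle_trans with (h m); [apply Hl | apply Hr]; lra.
Qed.

Lemma nondecr_on_eq lo hi h h' :
  (forall s, lo <= s <= hi -> h s = h' s) -> nondecr_on lo hi h' -> nondecr_on lo hi h.
Proof. intros E H s1 s2 h1 h12 h2. rewrite !E by lra. apply H; lra. Qed.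

Definition rescale (a b s : R) : R := (s - a) / (b - a).

Lemma rescale_l a b : rescale a b a = 0.
Proof. unfold rescale, Rdiv. rewrite Rminus_diag. apply Rmult_0_l. Qed.

Lemma rescale_r a b : a < b -> rescale a b b = 1.
Proof. intros. unfold rescale. field. lra. Qed.

Lemma rescale_inv a b s : a < b -> a + (b - a) * rescale a b s = s.
Proof. intros. unfold rescale. field. lra. Qed.

Lemma rescale_le a b s1 s2 : a < b -> s1 <= s2 -> rescale a b s1 <= rescale a b s2.
Proof.
  intros. unfold rescale, Rdiv. apply Rmult_le_compat_r; [|lra].
  left. apply Rinv_0_lt_compat. lra.
Qed.

Lemma rescale_in01 a b s : a < b -> a <= s <= b -> in01 (rescale a b s).
Proof.
  intros hab hs. unfold in01. rewrite <- (rescale_l a b), <- (rescale_r a b hab).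
  split; apply rescale_le; lra.
Qed.

Lemma nondecr_on_rescale a b c k : a < b -> nondecr_on 0 1 k ->
  nondecr_on a b (fun s => c + (b - a) * k (rescale a b s)).
Proof.
  intros hab Hk s1 s2 h1 h12 h2.
  apply Rplus_le_compat_l, Rmult_le_compat_l; [lra|].
  apply Hk.
  - apply (rescale_in01 a b s1); lra.
  - apply rescale_le; lra.
  - apply (rescale_in01 a b s2); lra.
Qed.

Lemma Rmin_affine a c u v : 0 < c -> a + c * Rmin u v = Rmin (a + c * u) (a + c * v).
Proof.
  intros. unfold Rmin. destruct (Rle_dec u v), (Rle_dec (a + c * u) (a + c * v)); nra.
Qed.

Section TNorm.

Variable f : R -> R -> R.
Hypothesis tn : is_tnorm f.

Lemma tnorm_nondecr_l t : in01 t -> nondecr_on 0 1 (fun x => f x t).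
Proof.
  intros ht x y hx hxy hy. destruct tn as [_ [_ [_ [Hm _]]]].
  apply Hm; unfold in01 in *; auto; lra.
Qed.

Lemma tnorm_1_l x : in01 x -> f 1 x = x.
Proof.
  intros hx. destruct tn as [_ [Hc [_ [_ Hn]]]].
  rewrite Hc; [apply Hn; exact hx | unfold in01; lra | exact hx].
Qed.

Lemma tnorm_le_l x y : in01 x -> in01 y -> f x y <= x.
Proof.
  intros hx hy. destruct tn as [_ [Hc _]].
  rewrite Hc by assumption. rewrite <- (tnorm_1_l x hx) at 2.
  apply tnorm_nondecr_l; unfold in01 in *; lra.
Qed.

Lemma tnorm_boundary_min u v : in01 u -> in01 v ->
  u = 0 \/ u = 1 \/ v = 0 \/ v = 1 -> f u v = Rmin u v.
Proof.
  intros hu hv Hend. destruct tn as [Hr [Hc [_ [_ Hn]]]].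
  assert (f_0_l : forall x, in01 x -> f 0 x = 0).
  { intros x hx. assert (in01 0) by (unfold in01; lra).
    pose proof (tnorm_le_l 0 x ltac:(assumption) hx). destruct (Hr 0 x); auto; lra. }
  unfold in01 in *.
  destruct Hend as [-> | [-> | [-> | ->]]].
  - rewrite f_0_l by assumption. symmetry. apply Rmin_left. lra.
  - rewrite tnorm_1_l by assumption. symmetry. apply Rmin_right. lra.
  - rewrite Hc, f_0_l by (unfold in01; lra). symmetry. apply Rmin_right. lra.
  - rewrite Hn by assumption. symmetry. apply Rmin_left. lra.
Qed.

Lemma tnorm_ge_lukasiewicz x y : propA f -> in01 x -> in01 y -> x <= y ->
  x + y - 1 <= f x y.
Proof.
  intros HA hx hy hxy. destruct tn as [Hr [_ [_ [_ Hn]]]].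
  destruct (Rle_dec (x + y - 1) 0).
  - destruct (Hr x y hx hy). lra.
  - unfold in01 in *. rewrite <- (Hn (x + y - 1)) by (unfold in01; lra).
    apply HA; lra.
Qed.

Lemma tnorm_lipschitz_l t : propB f -> in01 t -> nondecr_on 0 1 (fun x => x - f x t).
Proof.
  intros HB ht x y hx hxy hy. destruct tn as [_ [_ [_ [_ Hn]]]].
  rewrite <- (Hn x), <- (Hn y) at 1 by (unfold in01; lra).
  unfold in01 in ht. apply HB; lra.
Qed.

End TNorm.

Section OrdinalSum.

Variables (I : Type) (a b : I -> R) (f : I -> R -> R -> R) (g : R -> R -> R).
Hypothesis block_range : forall i, 0 <= a i /\ a i < b i /\ b i <= 1.
Hypothesis blocks_disjoint :
  forall i j, i <> j -> forall t, ~ (a i < t < b i /\ a j < t < b j).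
Hypothesis tn : forall i, is_tnorm (f i).
Hypothesis ord_sum : is_ordinal_sum I f a b g.

Local Notation rs i := (rescale (a i) (b i)).

Lemma blocks_ordered i j : i <> j -> b i <= a j \/ b j <= a i.
Proof.
  intros hij.
  destruct (Rle_dec (b i) (a j)); [now left|].
  destruct (Rle_dec (b j) (a i)); [now right|].
  exfalso. apply (blocks_disjoint i j hij ((Rmax (a i) (a j) + Rmin (b i) (b j)) / 2)).
  pose proof (block_range i). pose proof (block_range j).
  unfold Rmax, Rmin. destruct (Rle_dec (a i) (a j)), (Rle_dec (b i) (b j)); lra.
Qed.

Lemma g_block i s t : a i <= s <= b i -> a i <= t <= b i ->
  g s t = a i + (b i - a i) * f i (rs i s) (rs i t).
Proof. intros. now apply (proj1 (ord_sum s t)). Qed.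

Lemma g_off_blocks s t :
  (forall i, ~ (a i <= s <= b i /\ a i <= t <= b i)) -> g s t = Rmin s t.
Proof. apply (proj2 (ord_sum s t)). Qed.

Lemma g_off_open_blocks s t :
  (forall i, ~ (a i < s < b i /\ a i < t < b i)) -> g s t = Rmin s t.
Proof.
  intros Hopen.
  destruct (classic (exists i, a i <= s <= b i /\ a i <= t <= b i)) as [[i [hs ht]] | Hno].
  - destruct (block_range i) as [_ [hab _]].
    assert (Hend : rs i s = 0 \/ rs i s = 1 \/ rs i t = 0 \/ rs i t = 1).
    { rewrite <- (rescale_l (a i) (b i)), <- (rescale_r (a i) (b i) hab).
      destruct (Rle_lt_or_eq_dec _ _ (proj1 hs)) as [? | <-]; [| now left].
      destruct (Rle_lt_or_eq_dec _ _ (proj2 hs)) as [? | ->]; [| now right; left].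
      destruct (Rle_lt_or_eq_dec _ _ (proj1 ht)) as [? | <-]; [| now right; right; left].
      destruct (Rle_lt_or_eq_dec _ _ (proj2 ht)) as [? | ->]; [| now right; right; right].
      exfalso. apply (Hopen i). lra. }
    rewrite (g_block i s t hs ht), (tnorm_boundary_min (f i) (tn i)), Rmin_affine,
      !rescale_inv; auto using rescale_in01; lra.
  - apply g_off_blocks. intros i hi. apply Hno. now exists i.
Qed.

Lemma g_le_l s t : g s t <= s.
Proof.
  destruct (classic (exists i, a i <= s <= b i /\ a i <= t <= b i)) as [[i [hs ht]] | Hno].
  - destruct (block_range i) as [_ [hab _]].
    rewrite (g_block i s t hs ht).
    apply Rle_trans with (a i + (b i - a i) * rs i s); [| rewrite rescale_inv; lra].
    apply Rplus_le_compat_l, Rmult_le_compat_l; [lra|].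
    apply tnorm_le_l; auto using rescale_in01.
  - rewrite g_off_blocks by (intros i hi; apply Hno; now exists i).
    apply Rmin_l.
Qed.

Lemma g_left_of_block i s t : a i <= t <= b i -> s <= a i -> g s t = s.
Proof.
  intros ht hs. pose proof (block_range i).
  rewrite g_off_open_blocks by
    (intros j Hj; destruct (classic (i = j)) as [<- | hij];
     [lra | destruct (blocks_ordered i j hij); lra]).
  apply Rmin_left. lra.
Qed.

Lemma g_right_of_block i s t : a i <= t <= b i -> b i <= s -> g s t = t.
Proof.
  intros ht hs. pose proof (block_range i).
  rewrite g_off_open_blocks by
    (intros j Hj; destruct (classic (i = j)) as [<- | hij];
     [lra | destruct (blocks_ordered i j hij); lra]).
  apply Rmin_right. lra.
Qed.

Lemma g_propA_in_block i x y z w : propA (f i) ->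
  a i <= x -> x <= y -> y <= z -> z <= w -> w <= b i -> w + x <= y + z ->
  g x w <= g y z.
Proof.
  intros HA hx hxy hyz hzw hw hsum. destruct (block_range i) as [_ [hab _]].
  rewrite (g_block i x w), (g_block i y z) by lra.
  apply Rplus_le_compat_l, Rmult_le_compat_l; [lra|].
  assert (Hadd : forall p q, rs i p + rs i q = rs i (p + q - a i))
    by (intros; unfold rescale; field; lra).
  apply HA; try (apply rescale_le; lra).
  - apply (rescale_in01 (a i) (b i) x); lra.
  - apply (rescale_in01 (a i) (b i) w); lra.
  - rewrite !Hadd. apply rescale_le; lra.
Qed.

Lemma g_ge_in_block i y z : propA (f i) -> a i <= y -> y <= z -> z <= b i ->
  a i <= g y z /\ y + z - b i <= g y z.
Proof.
  intros HA hy hyz hz. destruct (block_range i) as [_ [hab _]].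
  assert (Iy : in01 (rs i y)) by (apply rescale_in01; lra).
  assert (Iz : in01 (rs i z)) by (apply rescale_in01; lra).
  pose proof (proj1 (tn i) _ _ Iy Iz) as Hf01.
  pose proof (tnorm_ge_lukasiewicz (f i) (tn i) _ _ HA Iy Iz
                (rescale_le _ _ _ _ hab hyz)) as Hluk.
  assert (Hscale : a i + (b i - a i) * (rs i y + rs i z - 1) = y + z - b i)
    by (unfold rescale; field; lra).
  rewrite (g_block i y z) by lra. unfold in01 in Hf01.
  split.
  - assert (0 <= (b i - a i) * f i (rs i y) (rs i z)) by (apply Rmult_le_pos; lra). lra.
  - rewrite <- Hscale. apply Rplus_le_compat_l, Rmult_le_compat_l; lra.
Qed.

Lemma propA_ordinal_sum : (forall i, propA (f i)) -> propA g.
Proof.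
  intros HA x y z w hx hxy hyz hzw hw hsum.
  pose proof (g_le_l x w).
  destruct (classic (exists i, a i <= y /\ z <= b i)) as [[i [hy hz]] | Hno].
  - destruct (classic (a i <= x /\ w <= b i)) as [[hxi hwi] | Hout].
    + now apply (g_propA_in_block i).
    + destruct (g_ge_in_block i y z (HA i) hy hyz hz).
      destruct (Rlt_or_le x (a i)); [lra|].
      assert (b i < w) by (apply Rnot_le_lt; intro; apply Hout; split; lra).
      lra.
  - rewrite (g_off_blocks y z) by (intros i Hi; apply Hno; exists i; lra).
    rewrite Rmin_left; lra.
Qed.

Lemma g_nondecr_l t : nondecr_on 0 1 (fun s => g s t).
Proof.
  destruct (classic (exists i, a i <= t <= b i)) as [[i ht] | Hno].
  - destruct (block_range i) as [_ [hab _]].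
    apply nondecr_on_glue with (a i); [| apply nondecr_on_glue with (b i)];
      intros s1 s2 h1 h12 h2.
    + rewrite !(g_left_of_block i) by lra. exact h12.
    + rewrite !(g_block i) by lra.
      apply (nondecr_on_rescale _ _ _ (fun u => f i u (rs i t)) hab); auto.
      apply tnorm_nondecr_l; auto using rescale_in01.
    + rewrite !(g_right_of_block i) by lra. lra.
  - intros s1 s2 h1 h12 h2.
    rewrite !g_off_blocks by (intros i [_ Hi]; apply Hno; now exists i).
    now apply Rle_min_compat_r.
Qed.

Lemma g_lipschitz_l t : (forall i, propB (f i)) -> nondecr_on 0 1 (fun s => s - g s t).
Proof.
  intros HB.
  destruct (classic (exists i, a i <= t <= b i)) as [[i ht] | Hno].
  - destruct (block_range i) as [_ [hab _]].
    apply nondecr_on_glue with (a i); [| apply nondecr_on_glue with (b i)].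
    + intros s1 s2 h1 h12 h2. rewrite !(g_left_of_block i) by lra. lra.
    + apply nondecr_on_eq with
        (fun s => 0 + (b i - a i) * (rs i s - f i (rs i s) (rs i t))).
      { intros s hs. rewrite (g_block i) by lra. unfold rescale. field. lra. }
      apply (nondecr_on_rescale _ _ _ (fun u => u - f i u (rs i t)) hab).
      apply tnorm_lipschitz_l; auto using rescale_in01.
    + intros s1 s2 h1 h12 h2. rewrite !(g_right_of_block i) by lra. lra.
  - intros s1 s2 h1 h12 h2.
    rewrite !g_off_blocks by (intros i [_ Hi]; apply Hno; now exists i).
    unfold Rmin. destruct (Rle_dec s1 t), (Rle_dec s2 t); lra.
Qed.

Lemma g_split z w : 0 <= z -> z <= w -> w <= 1 ->
  ~ (exists i, a i <= z /\ w <= b i) ->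
  exists m, 0 <= m <= 1 /\
    (forall s, s <= m -> g s w = s) /\ (forall s, m <= s -> g s z = z).
Proof.
  intros hz hzw hw Hno.
  destruct (classic (exists i, a i <= z <= b i)) as [[i hzi] | Hz].
  - pose proof (block_range i).
    assert (b i < w) by (apply Rnot_le_lt; intro; apply Hno; exists i; lra).
    exists (b i). split; [lra | split]; intros s hs.
    + rewrite g_off_open_blocks by
        (intros j Hj; destruct (classic (i = j)) as [<- | hij];
         [lra | destruct (blocks_ordered i j hij); lra]).
      apply Rmin_left. lra.
    + apply (g_right_of_block i); lra.
  - exists z. split; [lra | split]; intros s hs.
    + rewrite g_off_open_blocks by (intros j Hj; apply Hz; exists j; lra).
      apply Rmin_left. lra.
    + rewrite g_off_blocks by (intros j [_ Hj]; apply Hz; now exists j).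
      apply Rmin_right. lra.
Qed.

Lemma propB_ordinal_sum : (forall i, propB (f i)) -> propB g.
Proof.
  intros HB x y z w hx hxy hy hz hzw hw.
  enough (H : nondecr_on 0 1 (fun s => g s w - g s z)) by (apply H; lra).
  destruct (classic (exists i, a i <= z /\ w <= b i)) as [[i [hzi hwi]] | Hno].
  - destruct (block_range i) as [_ [hab _]].
    apply nondecr_on_glue with (a i); [| apply nondecr_on_glue with (b i)].
    + intros s1 s2 h1 h12 h2.
      rewrite !(g_left_of_block i s1), !(g_left_of_block i s2) by lra. lra.
    + apply nondecr_on_eq with
        (fun s => 0 + (b i - a i) * (f i (rs i s) (rs i w) - f i (rs i s) (rs i z))).
      { intros s hs. rewrite !(g_block i) by lra. ring. }
      apply (nondecr_on_rescale _ _ _ (fun u => f i u (rs i w) - f i u (rs i z)) hab).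
      assert (in01 (rs i z)) by (apply rescale_in01; lra).
      assert (in01 (rs i w)) by (apply rescale_in01; lra).
      assert (rs i z <= rs i w) by (apply rescale_le; lra).
      intros u v hu huv hv. unfold in01 in *. apply HB; lra.
    + intros s1 s2 h1 h12 h2.
      rewrite !(g_right_of_block i s1), !(g_right_of_block i s2) by lra. lra.
  - destruct (g_split z w hz hzw hw Hno) as [m [hm [Hw Hz]]].
    apply nondecr_on_glue with m; intros s1 s2 h1 h12 h2.
    + rewrite !Hw by lra. apply (g_lipschitz_l z HB); lra.
    + rewrite !Hz by lra. pose proof (g_nondecr_l w s1 s2). lra.
Qed.

End OrdinalSum.

Theorem lemma1 (I : Type) (a b : I -> R) (f : I -> R -> R -> R)
  (g : R -> R -> R) :
  interval_family I a b ->
  (forall i, is_tnorm (f i)) ->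
  is_ordinal_sum I f a b g ->
  ((forall i, propA (f i)) -> propA g) /\
  ((forall i, propB (f i)) -> propB g).
Proof.
  intros [_ [Hrange Hdisj]] HT HO.
  split; [apply (propA_ordinal_sum I a b f g) | apply (propB_ordinal_sum I a b f g)];
    assumption.
Qed.
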